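(* Let $N, N_y, M, p \in \mathbb{N}$ with $p\le N$, $X \in \mathbb{R}^{N \times M}$, $Y \in \mathbb{R}^{N_y \times M}$, $\lambda \ge 0$, $\Omega=\{1,\dots,N\}$, and let $\bar s_1,\dots,\bar s_p$ and $\bar S_0\subset\cdots\subset\bar S_p$ be a greedy sequence as defined in the context. Define recursively for $k=1,\dots,p$, starting from empty matrices $\Xi^{(0)}\in\mathbb{R}^{N\times 0}$, $\Theta^{(0)}\in\mathbb{R}^{N_y\times 0}$ (with the conventions $\Xi^{(0)}(\Xi^{(0)}_{\bar s_1})^\top = 0$, $\Theta^{(0)}(\Xi^{(0)}_{\bar s_1})^\top=0$, $[\Xi^{(0)},\xi^{(1)}]=\xi^{(1)}$, $[\Theta^{(0)},\theta^{(1)}]=\theta^{(1)}$): \begin{align*} \delta^{(k)} &= X X_{\bar s_k}^\top + \lambda (I_N)_{\bar s_k}^\top - \Xi^{(k-1)}(\Xi^{(k-1)}_{\bar s_k})^\top \in\mathbb{R}^N,\\ \xi^{(k)} &= \delta^{(k)}/\sqrt{\delta^{(k)}_{\bar s_k}},\qquad \theta^{(k)} = \bigl(Y X_{\bar s_k}^\top - \Theta^{(k-1)}(\Xi^{(k-1)}_{\bar s_k})^\top\bigr)/\sqrt{\delta^{(k)}_{\bar s_k}},\\ \Xi^{(k)} &= [\Xi^{(k-1)}, \xi^{(k)}]\in\mathbb{R}^{N\times k},\qquad \Theta^{(k)} = [\Theta^{(k-1)},\theta^{(k)}]\in\mathbb{R}^{N_y\times k}. \end{align*} Then for every $k\in\{1,\dots,p\}$: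 \begin{align*} \xi^{(k)} &= (Q^{xx}_{\bar s_k}(\bar S_{k-1}))^\top (Q^{xx}_{\bar s_k,\bar s_k}(\bar S_{k-1}))^{-1/2},\\ \theta^{(k)} &= (Q^{xy}_{\bar s_k}(\bar S_{k-1}))^\top (Q^{xx}_{\bar s_k,\bar s_k}(\bar S_{k-1}))^{-1/2},\\ Q^{xx}(\bar S_k) &= Q^{xx}(\bar S_{k-1}) - \xi^{(k)}\xi^{(k)\top} = XX^\top + \lambda I_N - \Xi^{(k)}\Xi^{(k)\top},\\ Q^{xy}(\bar S_k) &= Q^{xy}(\bar S_{k-1}) - \xi^{(k)}\theta^{(k)\top} = XY^\top - \Xi^{(k)}\Theta^{(k)\top}. \end{align*}
   Context: Notation: for a matrix $A$ and an ordered index set $S$, $A_S$ is the submatrix of rows indexed by $S$, $A_{S,S}$ the principal submatrix indexed by $S$; $A_i$ is row $i$ of $A$ (a row vector), $A_{i,i}$ its $(i,i)$ entry; $v_i$ is the $i$th component of a vector $v$; $(I_N)_{s}^\top$ is the $s$th canonical unit vector. $P^{xx} = XX^\top + \lambda I_N$, $P^{xy} = XY^\top$. $Q^{xx}(\emptyset)=P^{xx}$, $Q^{xy}(\emptyset)=P^{xy}$, and for $|S|\ge1$ with $P^{xx}_{S,S}\succ0$: $Q^{xx}(S) = P^{xx} - (P^{xx}_S)^\top (P^{xx}_{S,S})^{-1} P^{xx}_S$, $Q^{xy}(S) = P^{xy} - (P^{xx}_S)^\top (P^{xx}_{S,S})^{-1} P^{xy}_S$. $J(S) = \operatorname{tr}\{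 Y X_S^\top (X_S X_S^\top + \lambda I_{|S|})^{-1} X_S Y^\top \}$ for feasible $S$, $J(\emptyset)=0$. Greedy sequence: $\bar S_0=\emptyset$; for $k=1,\dots,p$, $\mathcal{I}_k = \{ i\in\Omega\setminus\bar S_{k-1} : P^{xx}_{S',S'}\succ0,\ S'=\bar S_{k-1}\cup\{i\}\}$ (assumed nonempty), $\bar s_k \in \arg\max_{i\in\mathcal{I}_k}\{J(\bar S_{k-1}\cup\{i\}) - J(\bar S_{k-1})\}$, $\bar S_k = \bar S_{k-1}\cup\{\bar s_k\}$. *)

From HB Require Import structures.
From mathcomp Require Import all_boot all_order all_algebra.
From mathcomp Require Import reals.
Set Implicit Arguments. Unset Strict Implicit. Unset Printing Implicit Defensive.
Import Order.TTheory GRing.Theory Num.Theory.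
Local Open Scope ring_scope.

(* Indices Omega = {1..N} are rendered as 'I_N (0-based). Index sets S are
   {set 'I_N}; the "ordered" submatrices use the increasing enumeration
   enum_val of S (the results do not depend on the order). *)

Section Defs.
Variable R : realType.

Definition rows_of (m n : nat) (A : 'M[R]_(m, n)) (S : {set 'I_m}) : 'M[R]_(#|S|, n) :=
  \matrix_(i < #|S|, j < n) A (enum_val i) j.

Definition subsq (n : nat) (A : 'M[R]_n) (S : {set 'I_n}) : 'M[R]_#|S| :=
  \matrix_(i < #|S|, j < #|S|) A (enum_val i) (enum_val j).

Definition posdef (n : nat) (A : 'M[R]_n) : Prop :=
  A^T = A /\ forall v : 'rV[R]_n, v != 0 -> 0 < (v *m A *m v^T) 0 0.

Variables (N Ny M : nat) (X : 'M[R]_(N, M)) (Y : 'M[R]_(Ny, M)) (lam : R).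

Definition Pxx : 'M[R]_N := X *m X^T + lam%:M.
Definition Pxy : 'M[R]_(N, Ny) := X *m Y^T.

(* For S = set0 these reduce to Pxx, Pxy (empty products vanish). *)
Definition Qxx (S : {set 'I_N}) : 'M[R]_N :=
  Pxx - (rows_of Pxx S)^T *m invmx (subsq Pxx S) *m rows_of Pxx S.
Definition Qxy (S : {set 'I_N}) : 'M[R]_(N, Ny) :=
  Pxy - (rows_of Pxx S)^T *m invmx (subsq Pxx S) *m rows_of Pxy S.

Definition Jval (S : {set 'I_N}) : R :=
  \tr (Y *m (rows_of X S)^T *m invmx (rows_of X S *m (rows_of X S)^T + lam%:M)
        *m rows_of X S *m Y^T).

(* greedy sequence: s k is \bar s_k for k = 1..p; \bar S_k = {s 1, ..., s k} *)
Definition Sbar (s : nat -> 'I_N) (k : nat) : {set 'I_N} :=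
  [set x | [exists i : 'I_k, x == s i.+1]].

Definition greedy (p : nat) (s : nat -> 'I_N) : Prop :=
  forall k, (0 < k <= p)%N ->
    [/\ s k \notin Sbar s k.-1,
        posdef (subsq Pxx (s k |: Sbar s k.-1)) &
        forall i, i \notin Sbar s k.-1 -> posdef (subsq Pxx (i |: Sbar s k.-1)) ->
          Jval (i |: Sbar s k.-1) - Jval (Sbar s k.-1)
            <= Jval (s k |: Sbar s k.-1) - Jval (Sbar s k.-1)].

Definition colsmx (n k : nat) (cs : seq 'cV[R]_n) : 'M[R]_(n, k) :=
  \matrix_(i < n, j < k) (nth 0 cs j) i 0.

Fixpoint gen (s : nat -> 'I_N) (k : nat) : seq 'cV[R]_N * seq 'cV[R]_Ny :=
  match k with
  | 0 => ([::], [::])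
  | k'.+1 =>
    let: (xs, ts) := gen s k' in
    let sk := s k in
    let Xi := colsmx k' xs in
    let Th := colsmx k' ts in
    let delta := X *m (row sk X)^T + lam *: (row sk (1%:M : 'M[R]_N))^T
                 - Xi *m (row sk Xi)^T in
    let c := (Num.sqrt (delta sk 0))^-1 in
    let xi := c *: delta in
    let th := c *: (Y *m (row sk X)^T - Th *m (row sk Xi)^T) in
    (rcons xs xi, rcons ts th)
  end.

Definition Xi (s : nat -> 'I_N) (k : nat) : 'M[R]_(N, k) := colsmx k (gen s k).1.
Definition Theta (s : nat -> 'I_N) (k : nat) : 'M[R]_(Ny, k) := colsmx k (gen s k).2.
Definition xi (s : nat -> 'I_N) (k : nat) : 'cV[R]_N := nth 0 (gen s k).1 k.-1.
Definition theta (s : nat -> 'I_N) (k : nat) : 'cV[R]_Ny := nth 0 (gen s k).2 k.-1.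
End Defs.

From Pilot Require Import Defs.
From mathcomp Require Import all_boot all_order all_algebra.
From mathcomp Require Import reals.
Import Order.TTheory GRing.Theory Num.Theory.
Local Open Scope ring_scope.
Set Implicit Arguments. Unset Strict Implicit. Unset Printing Implicit Defensive.

(* Let [selr S] be the 0/1 matrix whose rows pick the indices in [S].  Then [Qxx S]
   and [Qxy S] are [resid Pxx (selr S) B] for [B = Pxx, Pxy], where [resid P G B] is
   what is left of [B] after removing its [P]-projection onto the rows of [G].  The
   residual [Q] is characterized by [G *m Q = 0] and [B - Q] lying in the column space
   of [P G^T], so it depends only on the row space of [G].  Adding an index [i] to [S]
   adds the unit row [e_i], and the characterization gives the rank-one update
   [Q - Q e_i^T e_i Q / Q_ii]; the pivot [Q_ii] is a Schur complement of the positive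
   definite [subsq Pxx (i |: S)], hence positive.  With [xi = Q e_i^T / sqrt Q_ii] this
   update is exactly the recursion defining [xi] and [theta], and summing the updates
   gives [Qxx (Sbar k) = Pxx - Xi Xi^T]. *)

Section Residual.
Variables (F : fieldType) (N : nat) (P : 'M[F]_N).

Definition resid m n (G : 'M[F]_(m, N)) (B : 'M[F]_(N, n)) : 'M[F]_(N, n) :=
  B - P *m G^T *m invmx (G *m P *m G^T) *m (G *m B).

Lemma mul_resid0 m n (G : 'M_(m, N)) (B : 'M_(N, n)) :
  G *m P *m G^T \in unitmx -> G *m resid G B = 0.
Proof. by move=> U; rewrite /resid mulmxBr !mulmxA mulmxV // mul1mx subrr. Qed.

Lemma resid0 m n (B : 'M_(N, n)) : resid (0 : 'M_(m, N)) B = B.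
Proof. by rewrite /resid trmx0 !mulmx0 !mul0mx subr0. Qed.

Lemma residE m n (G : 'M_(m, N)) (B : 'M_(N, n)) (D : 'M_(m, n)) :
  G *m P *m G^T \in unitmx -> G *m (B - P *m G^T *m D) = 0 ->
  B - P *m G^T *m D = resid G B.
Proof.
move=> U /eqP; rewrite mulmxBr subr_eq0 !mulmxA => /eqP GB.
by rewrite /resid GB -(mulmxA (P *m G^T)) mulKmx.
Qed.

Lemma tr_resid m (G : 'M_(m, N)) : P^T = P -> (resid G P)^T = resid G P.
Proof.
by move=> PT; rewrite /resid raddfB /= !trmx_mul trmx_inv !trmx_mul trmxK PT !mulmxA.
Qed.

Lemma resid_adjoin m m' n (G : 'M_(m, N)) (g : 'rV_N) (G' : 'M_(m', N))
    (B : 'M_(N, n)) :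
  G *m P *m G^T \in unitmx -> G' *m P *m G'^T \in unitmx ->
  (G' == col_mx G g)%MS ->
  let d := (g *m resid G P *m g^T) 0 0 in d != 0 ->
  resid G' B = resid G B - d^-1 *: (resid G P *m g^T *m (g *m resid G B)).
Proof.
move=> U U' /andP[sG'H]; rewrite col_mx_sub => /andP[sGG' sgG'] d d0.
have [A G'E] := submxP sG'H.
have [C GC] := submxP sGG'; have [c gc] := submxP sgG'.
set w := g *m resid G B; set u := invmx (G *m P *m G^T) *m (G *m P *m g^T).
have residPg : resid G P *m g^T = P *m g^T - P *m G^T *m u.
  by rewrite /resid mulmxBl !mulmxA.
(* [G = C G'] and [g = c G'] rewrite the update in the form [B - P G'^T D]. *)
set D := C^T *m (invmx (G *m P *m G^T) *m (G *m B) - d^-1 *: (u *m w))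
         + c^T *m (d^-1 *: w).
set Z := resid G B - d^-1 *: (resid G P *m g^T *m w).
have GZ : G *m Z = 0.
  by rewrite /Z mulmxBr -scalemxAr !mulmxA !mul_resid0 // !mul0mx scaler0 subrr.
have gZ : g *m Z = 0.
  have dE : g *m resid G P *m g^T = d%:M by apply: mx11_scalar.
  rewrite /Z mulmxBr -scalemxAr -/w mulmxA (mulmxA g) dE mul_scalar_mx.
  by rewrite scalerA mulVf // scale1r subrr.
have ZE : Z = B - P *m G'^T *m D.
  have trG : G'^T *m C^T = G^T by rewrite -trmx_mul -GC.
  have trg : G'^T *m c^T = g^T by rewrite -trmx_mul -gc.
  rewrite /D mulmxDr !(mulmxA (P *m G'^T)) -!(mulmxA P) trG trg.
  rewrite /Z residPg {1}/resid !mulmxBl !mulmxBr !scalerBr -!scalemxAr !mulmxA.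
  by rewrite opprB opprD opprB !addrA; congr (_ - _); rewrite addrAC.
rewrite ZE; apply/esym/residE => //.
by rewrite -ZE G'E -mulmxA mul_col_mx GZ gZ col_mx0 mulmx0.
Qed.
End Residual.

Section PosdefOnRowSpace.
Variables (R : numFieldType) (N : nat) (P : 'M[R]_N).

Definition posdef_on m (G : 'M[R]_(m, N)) :=
  forall v : 'rV_N, (v <= G)%MS -> v != 0 -> 0 < (v *m P *m v^T) 0 0.

Lemma posdef_on_gram m (G : 'M_(m, N)) :
  (forall u : 'rV_m, u != 0 -> 0 < (u *m (G *m P *m G^T) *m u^T) 0 0) ->
  posdef_on G.
Proof.
move=> posG v /submxP[u ->] vn0.
have un0 : u != 0 by apply: contraNneq vn0 => ->; rewrite mul0mx.
by have := posG u un0; rewrite trmx_mul !mulmxA.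
Qed.

Lemma posdef_onS m m' (G : 'M_(m, N)) (G' : 'M_(m', N)) :
  (G <= G')%MS -> posdef_on G' -> posdef_on G.
Proof. by move=> sGG' posG' v svG; apply/posG'/(submx_trans svG). Qed.

Lemma gram_unit m (G : 'M_(m, N)) :
  row_free G -> posdef_on G -> G *m P *m G^T \in unitmx.
Proof.
move=> freeG posG; rewrite unitmxE unitfE; apply/negP => /det0P[u un0 uG0].
have uGn0 : u *m G != 0.
  apply: contraNneq un0 => uG0'; apply/eqP/(row_free_inj freeG).
  by rewrite /= uG0' mul0mx.
have := posG _ (submxMl u G) uGn0.
have -> : u *m G *m P *m (u *m G)^T = u *m (G *m P *m G^T) *m u^T.
  by rewrite trmx_mul !mulmxA.
by rewrite uG0 mul0mx mxE ltxx.
Qed.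

Lemma resid_quad_gt0 m (G : 'M_(m, N)) (g : 'rV_N) :
  G *m P *m G^T \in unitmx -> posdef_on (col_mx G g) -> ~~ (g <= G)%MS ->
  0 < (g *m resid P G P *m g^T) 0 0.
Proof.
move=> U posH gG.
(* [w] is [g] made [P]-orthogonal to the rows of [G]. *)
set c := g *m P *m G^T *m invmx (G *m P *m G^T); set w := g - c *m G.
have wH : (w <= col_mx G g)%MS.
  have := submxMl (row_mx (- c) 1%:M) (col_mx G g).
  by rewrite mul_row_col mul1mx mulNmx addrC.
have wn0 : w != 0 by apply: contra gG => /eqP/subr0_eq ->; apply: submxMl.
have wPG : w *m P *m G^T = 0.
  rewrite !mulmxBl.
  have -> : c *m G *m P *m G^T = c *m (G *m P *m G^T) by rewrite !mulmxA.
  by rewrite mulmxKV // subrr.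
have := posH w wH wn0.
suff -> : w *m P *m w^T = g *m resid P G P *m g^T by [].
have -> : w^T = g^T - G^T *m c^T by rewrite raddfB /= trmx_mul.
rewrite mulmxBr mulmxA wPG mul0mx subr0.
by rewrite /w /c /resid mulmxBr !mulmxBl !mulmxA.
Qed.
End PosdefOnRowSpace.

Section Selection.
Context {F : fieldType} {N : nat}.
Implicit Types (S : {set 'I_N}) (i : 'I_N).

Definition selr (S : {set 'I_N}) : 'M[F]_(#|S|, N) := rowsub enum_val 1%:M.

Lemma row_selr S j : row j (selr S) = 'e_(enum_val j).
Proof. by rewrite row_rowsub row1. Qed.

Lemma selr_mul_tr S : selr S *m (selr S)^T = 1%:M.
Proof.
rewrite mul_rowsub_mx mul1mx; apply/matrixP => j l.
by rewrite !mxE (inj_eq enum_val_inj) eq_sym.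
Qed.

Lemma row_free_selr S : row_free (selr S).
Proof. by apply/row_freeP; exists (selr S)^T; apply: selr_mul_tr. Qed.

Lemma delta_sub_selr S i : i \in S -> (('e_i : 'rV[F]_N) <= selr S)%MS.
Proof. by move=> iS; rewrite -(enum_rankK_in iS iS) -row_selr row_sub. Qed.

Lemma delta_notsub_selr S i : i \notin S -> ~~ (('e_i : 'rV[F]_N) <= selr S)%MS.
Proof.
move=> iS; apply/negP => /submxP[u /(congr1 (fun v : 'rV_N => v 0 i))].
rewrite !mxE !eqxx big1 => [/eqP|j _]; first by rewrite oner_eq0.
rewrite !mxE; case: eqP => [eji|]; last by rewrite mulr0.
by move: iS; rewrite -eji enum_valP.
Qed.

Lemma selr_subset S S' : S \subset S' -> (selr S <= selr S')%MS.
Proof.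
move=> sSS'; apply/row_subP => j; rewrite row_selr.
by apply/delta_sub_selr/(subsetP sSS')/enum_valP.
Qed.

Lemma selr_setU1 S i : (selr (i |: S) == col_mx (selr S) ('e_i : 'rV[F]_N))%MS.
Proof.
apply/andP; split.
  apply/row_subP => j; rewrite row_selr.
  have /setU1P[->|jS] := enum_valP j; first by rewrite -addsmxE addsmxSr.
  by apply: submx_trans (delta_sub_selr jS) _; rewrite -addsmxE addsmxSl.
by rewrite col_mx_sub selr_subset ?subsetUr ?delta_sub_selr ?setU11.
Qed.
End Selection.

Section Submatrices.
Variables (R : realType) (N : nat).
Implicit Types (S : {set 'I_N}).

Lemma rows_ofE n (A : 'M[R]_(N, n)) S : rows_of A S = selr S *m A.
Proof. by rewrite -rowsubE; apply/matrixP => i j; rewrite !mxE. Qed.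

Lemma subsqE (A : 'M[R]_N) S : subsq A S = selr S *m A *m (selr S)^T.
Proof.
rewrite -rowsubE trmx_mxsub trmx1 mulmx_colsub mulmx1.
by apply/matrixP => i j; rewrite !mxE.
Qed.

Lemma posdef_on_subsq (A : 'M[R]_N) S : posdef (subsq A S) -> posdef_on A (selr S).
Proof. by case=> _; rewrite subsqE; apply: posdef_on_gram. Qed.
End Submatrices.

Section Covariance.
Variables (R : realType) (N Ny M : nat) (X : 'M[R]_(N, M)) (Y : 'M[R]_(Ny, M)).
Variable lam : R.
Implicit Types (S : {set 'I_N}) (i : 'I_N).
Local Notation P := (Pxx X lam).

Lemma Pxx_tr : P^T = P.
Proof. by rewrite /Pxx raddfD /= trmx_mul trmxK tr_scalar_mx. Qed.

Lemma Qxx_resid S : Qxx X lam S = resid P (selr S) P.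
Proof. by rewrite /Qxx /resid rows_ofE subsqE trmx_mul Pxx_tr !mulmxA. Qed.

Lemma Qxy_resid S : Qxy X Y lam S = resid P (selr S) (Pxy X Y).
Proof. by rewrite /Qxy /resid !rows_ofE subsqE trmx_mul Pxx_tr !mulmxA. Qed.

Lemma Q_setU1 S i : i \notin S -> posdef (subsq P (i |: S)) ->
  let Q := Qxx X lam S in
  [/\ 0 < Q i i,
      Qxx X lam (i |: S) = Q - (Q i i)^-1 *: ((row i Q)^T *m row i Q) &
      Qxy X Y lam (i |: S)
        = Qxy X Y lam S - (Q i i)^-1 *: ((row i Q)^T *m row i (Qxy X Y lam S))].
Proof.
move=> iS /posdef_on_subsq posS' Q.
have /andP[_ sHS'] := selr_setU1 (F := R) S i.
have posS : posdef_on P (selr S).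
  by apply: posdef_onS posS'; rewrite selr_subset ?subsetUr.
have U := gram_unit (row_free_selr S) posS.
have U' := gram_unit (row_free_selr (i |: S)) posS'.
have QE : Q = resid P (selr S) P by apply: Qxx_resid.
set e : 'rV[R]_N := 'e_i.
have eM n (B : 'M[R]_(N, n)) : e *m B = row i B by rewrite rowE.
have dE : (e *m resid P (selr S) P *m e^T) 0 0 = Q i i.
  by rewrite eM -QE trmx_delta -colE !mxE.
have Qe : resid P (selr S) P *m e^T = (row i Q)^T.
  by rewrite -QE tr_row trmx_delta -colE QE tr_resid // Pxx_tr.
have Qii_gt0 : 0 < Q i i.
  by rewrite -dE; apply: resid_quad_gt0 U (posdef_onS sHS' posS') (delta_notsub_selr iS).
have d0 : (e *m resid P (selr S) P *m e^T) 0 0 != 0 by rewrite dE gt_eqF.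
split => //.
  by rewrite Qxx_resid (resid_adjoin _ U U' (selr_setU1 S i) d0) dE Qe eM -QE.
by rewrite !Qxy_resid (resid_adjoin _ U U' (selr_setU1 S i) d0) dE Qe eM.
Qed.
End Covariance.

Lemma scale_invsqrt_outer (R : rcfType) n m (d : R) (u : 'cV[R]_n) (v : 'cV[R]_m) :
  0 <= d -> ((Num.sqrt d)^-1 *: u) *m ((Num.sqrt d)^-1 *: v)^T = d^-1 *: (u *m v^T).
Proof.
move=> d_ge0; rewrite linearZ /= -scalemxAl -scalemxAr scalerA.
by rewrite -invfM -expr2 sqr_sqrtr.
Qed.

Lemma colsmx_rcons (R : realType) n n' k (xs : seq 'cV[R]_n) (ys : seq 'cV[R]_n') x y :
  size xs = k -> size ys = k ->
  colsmx k.+1 (rcons xs x) *m (colsmx k.+1 (rcons ys y))^T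
  = colsmx k xs *m (colsmx k ys)^T + x *m y^T.
Proof.
move=> sx sy; apply/matrixP => a b; rewrite !mxE big_ord_recr /=; congr (_ + _).
  by apply: eq_bigr => j _; rewrite !mxE !nth_rcons sx sy /= ltn_ord.
by rewrite !mxE !nth_rcons sx sy ltnn eqxx big_ord1 !mxE.
Qed.

Section GreedyRecursion.
Variables (R : realType) (N Ny M : nat) (X : 'M[R]_(N, M)) (Y : 'M[R]_(Ny, M)).
Variables (lam : R) (s : nat -> 'I_N).
Local Notation P := (Pxx X lam).
Local Notation gen := (gen X Y lam s).
Local Notation Xi := (Xi X Y lam s).
Local Notation Theta := (Theta X Y lam s).
Local Notation xi := (xi X Y lam s).
Local Notation theta := (theta X Y lam s).

Lemma Sbar0 : Sbar s 0 = set0.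
Proof. by apply/setP => x; rewrite !inE; apply/existsP; case=> -[]. Qed.

Lemma SbarS k : Sbar s k.+1 = s k.+1 |: Sbar s k.
Proof.
apply/setP => x; rewrite !inE; apply/existsP/orP.
  case=> j /eqP ->; case: (ltnP j k) => jk.
    by right; apply/existsP; exists (Ordinal jk).
  have -> : (j : nat) = k by apply/eqP; rewrite eqn_leq jk -ltnS ltn_ord.
  by left.
case=> [/eqP ->|/existsP [j /eqP ->]]; first by exists ord_max.
by exists (widen_ord (leqnSn k) j).
Qed.

Lemma size_gen k : size (gen k).1 = k /\ size (gen k).2 = k.
Proof.
by elim: k => //= k; case: (gen k) => xs ts /= [sx st]; rewrite !size_rcons sx st.
Qed.

Lemma xi_thetaS k (i := s k.+1) (Q := P - Xi k *m (Xi k)^T) :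
  xi k.+1 = (Num.sqrt (Q i i))^-1 *: (row i Q)^T /\
  theta k.+1 = (Num.sqrt (Q i i))^-1 *: (row i (Pxy X Y - Xi k *m (Theta k)^T))^T.
Proof.
have outer_tr n' n'' (A : 'M[R]_(n', n'')) (B : 'M[R]_(N, n'')) :
  (row i (B *m A^T))^T = A *m (row i B)^T by rewrite row_mul trmx_mul trmxK.
have deltaE : (row i Q)^T
    = X *m (row i X)^T + lam *: (row i 1%:M)^T - Xi k *m (row i (Xi k))^T.
  rewrite [row i _]raddfB [(_ - _)^T]raddfB /= outer_tr /Pxx.
  by rewrite [row i _]raddfD [(_ + _)^T]raddfD /= outer_tr -(scalemx1 _ lam) !linearZ.
have thetaE : (row i (Pxy X Y - Xi k *m (Theta k)^T))^T
    = Y *m (row i X)^T - Theta k *m (row i (Xi k))^T.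
  by rewrite [row i _]raddfB [(_ - _)^T]raddfB /= !outer_tr.
have [sx st] := size_gen k.
have QiiE : Q i i = ((row i Q)^T) i 0 by rewrite !mxE.
rewrite /Defs.xi /Defs.theta QiiE deltaE thetaE /Defs.Xi /Defs.Theta /=.
move: sx st; case: (gen k) => xs ts /= sx st.
by rewrite !nth_rcons sx st ltnn eqxx.
Qed.

Lemma Xi_outerS k :
  Xi k.+1 *m (Xi k.+1)^T = Xi k *m (Xi k)^T + xi k.+1 *m (xi k.+1)^T /\
  Xi k.+1 *m (Theta k.+1)^T = Xi k *m (Theta k)^T + xi k.+1 *m (theta k.+1)^T.
Proof.
have [sx st] := size_gen k.
rewrite /Defs.Xi /Defs.Theta /Defs.xi /Defs.theta /=.
move: sx st; case: (gen k) => xs ts /= sx st.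
by rewrite !nth_rcons sx st ltnn eqxx !colsmx_rcons.
Qed.

Variable p : nat.
Hypothesis greedy_s : greedy X Y lam p s.

Lemma greedy_step k : (k < p)%N ->
  Qxx X lam (Sbar s k) = P - Xi k *m (Xi k)^T ->
  Qxy X Y lam (Sbar s k) = Pxy X Y - Xi k *m (Theta k)^T ->
  let S := Sbar s k in
  let c := (Num.sqrt (Qxx X lam S (s k.+1) (s k.+1)))^-1 in
  [/\ xi k.+1 = c *: (row (s k.+1) (Qxx X lam S))^T,
      theta k.+1 = c *: (row (s k.+1) (Qxy X Y lam S))^T,
      Qxx X lam (Sbar s k.+1) = Qxx X lam S - xi k.+1 *m (xi k.+1)^T
        /\
      Qxx X lam (Sbar s k.+1) = P - Xi k.+1 *m (Xi k.+1)^T &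
      Qxy X Y lam (Sbar s k.+1) = Qxy X Y lam S - xi k.+1 *m (theta k.+1)^T
        /\
      Qxy X Y lam (Sbar s k.+1) = Pxy X Y - Xi k.+1 *m (Theta k.+1)^T].
Proof.
move=> kp QE QyE S c.
have [/= notin_S pd _] := greedy_s (k := k.+1) kp.
have [Qii_gt0 QxxE QxyE] := Q_setU1 Y notin_S pd.
have [xiE thetaE] := xi_thetaS k; rewrite -QE -QyE -/S -/c in xiE thetaE.
have [XiE ThetaE] := Xi_outerS k.
have xixi : xi k.+1 *m (xi k.+1)^T = (Qxx X lam S (s k.+1) (s k.+1))^-1 *:
    ((row (s k.+1) (Qxx X lam S))^T *m row (s k.+1) (Qxx X lam S)).
  by rewrite xiE (scale_invsqrt_outer _ _ (ltW Qii_gt0)) trmxK.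
have xitheta : xi k.+1 *m (theta k.+1)^T = (Qxx X lam S (s k.+1) (s k.+1))^-1 *:
    ((row (s k.+1) (Qxx X lam S))^T *m row (s k.+1) (Qxy X Y lam S)).
  by rewrite xiE thetaE (scale_invsqrt_outer _ _ (ltW Qii_gt0)) trmxK.
rewrite SbarS QxxE QxyE xixi xitheta; split => //; split => //.
  by rewrite XiE opprD addrA -QE xixi.
by rewrite ThetaE opprD addrA -QyE xitheta.
Qed.

Lemma Q_factorization k : (k <= p)%N ->
  Qxx X lam (Sbar s k) = P - Xi k *m (Xi k)^T /\
  Qxy X Y lam (Sbar s k) = Pxy X Y - Xi k *m (Theta k)^T.
Proof.
elim: k => [|k IH] kp.
  have selr0 : selr set0 = 0 :> 'M[R]_(#|set0 : {set 'I_N}|, N).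
    by apply/matrixP => j; have := leq_trans (ltn_ord j) (eq_leq (cards0 _)).
  rewrite Sbar0 Qxx_resid Qxy_resid selr0 !resid0 [Xi 0]thinmx0.
  by rewrite !mul0mx !subr0.
have [QE QyE] := IH (ltnW kp).
by have [_ _ [_ ->] [_ ->]] := greedy_step kp QE QyE.
Qed.
End GreedyRecursion.

Theorem lemma3 (R : realType) (N Ny M p : nat) (X : 'M[R]_(N, M)) (Y : 'M[R]_(Ny, M))
  (lam : R) (s : nat -> 'I_N) :
  (p <= N)%N -> 0 <= lam -> greedy X Y lam p s ->
  forall k, (0 < k <= p)%N ->
    let S := Sbar s k.-1 in
    let c := (Num.sqrt (Qxx X lam S (s k) (s k)))^-1 in
    [/\ xi X Y lam s k = c *: (row (s k) (Qxx X lam S))^T,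
        theta X Y lam s k = c *: (row (s k) (Qxy X Y lam S))^T,
        Qxx X lam (Sbar s k) = Qxx X lam S - xi X Y lam s k *m (xi X Y lam s k)^T
          /\
        Qxx X lam (Sbar s k) = Pxx X lam - Xi X Y lam s k *m (Xi X Y lam s k)^T &
        Qxy X Y lam (Sbar s k) = Qxy X Y lam S - xi X Y lam s k *m (theta X Y lam s k)^T
          /\
        Qxy X Y lam (Sbar s k) = Pxy X Y - Xi X Y lam s k *m (Theta X Y lam s k)^T].
Proof.
move=> _ _ greedy_s [//|k] kp.
have [QE QyE] := Q_factorization greedy_s (ltnW kp).
exact (greedy_step greedy_s kp QE QyE).
Qed.
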